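(* For every $n\ge 3$, $$\sum_{T\in\mathcal{BT}_n}S(T)=n\sum_{k=1}^{n-1}\frac{(2n-k-3)!\,k^2}{(n-k-1)!\,2^{n-k-1}}.$$
   Context: $\mathcal{BT}_n$ is the set of (isomorphism classes of) binary phylogenetic trees with leaves bijectively labeled by $\{1,\dots,n\}$ (rooted trees, every internal node with exactly two children). The depth $\delta_T(v)$ is the number of arcs from the root to $v$, and the Sackin index is $S(T)=\sum_{i=1}^n\delta_T(i)$. *)

From HB Require Import structures.
From mathcomp Require Import all_boot all_order all_algebra.
From Stdlib Require List.
Set Implicit Arguments. Unset Strict Implicit. Unset Printing Implicit Defensive.

Inductive btree : Type :=
| Leaf : nat -> btree
| Node : btree -> btree -> btree.

Fixpoint leaves (t : btree) : seq nat :=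
  match t with
  | Leaf i => [:: i]
  | Node l r => leaves l ++ leaves r
  end.

Fixpoint leaf_depths (t : btree) : seq nat :=
  match t with
  | Leaf _ => [:: 0]
  | Node l r => map S (leaf_depths l ++ leaf_depths r)
  end.

Definition sackin (t : btree) : nat := sumn (leaf_depths t).

Fixpoint minleaf (t : btree) : nat :=
  match t with
  | Leaf i => i
  | Node l r => minn (minleaf l) (minleaf r)
  end.

(* Canonical representative of an isomorphism class (children are unordered):
   at each internal node the left subtree contains the smallest label. *)
Fixpoint canonical (t : btree) : bool :=
  match t with
  | Leaf _ => true
  | Node l r => [&& canonical l, canonical r & minleaf l < minleaf r]
  end.

Definition is_BT (n : nat) (t : btree) : bool :=
  perm_eq (leaves t) (iota 1 n) && canonical t.

From HB Require Import structures.
From mathcomp Require Import all_boot all_order all_algebra.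
From Stdlib Require List.
From mathcomp Require Import zify ring.
Import GRing.Theory Num.Theory.
Set Implicit Arguments. Unset Strict Implicit. Unset Printing Implicit Defensive.

(* BT_(n+1) is generated from BT_n by grafting the new, largest label n + 1
   onto one of the 2n - 1 edges of each tree (an edge above the root counts):
   [graft] realises this operation, [prune] inverts it, and canonicity of the
   representatives is preserved in both directions because the new label is
   the largest one.  This yields a duplicate-free enumeration [bt_enum n] of
   BT_n.  Grafting a leaf in all possible ways into a tree with m leaves and
   Sackin index S gives Sackin indices summing to (2m + 2) S + m + 1, whence
   recurrences and closed forms for |BT_n| = (2n - 3)!! and for the total
   Sackin index n (2^(n-1) (n-1)! - (2n-3)!!).  Finally the sum in the
   statement is evaluated in the rationals: k^2 times its coefficient
   telescopes to a multiple of the coefficient itself, and the coefficients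
   sum to (n - 2)! 2^(n - 2) by Banach's matchbox identity. *)

Fixpoint btree_eqb (s t : btree) : bool :=
  match s, t with
  | Leaf a, Leaf b => a == b
  | Node l r, Node l' r' => btree_eqb l l' && btree_eqb r r'
  | _, _ => false
  end.

Lemma btree_eqP : Equality.axiom btree_eqb.
Proof.
elim=> [a|l IHl r IHr] [b|l' r'] /=; try by constructor.
- by apply: (iffP eqP) => [->|[]].
- apply: (iffP andP) => [[/IHl -> /IHr ->]|[<- <-]] //.
  by split; [apply/IHl | apply/IHr].
Qed.

HB.instance Definition _ := hasDecEq.Build btree btree_eqP.

Lemma size_leaves_gt0 (t : btree) : 0 < size (leaves t).
Proof. by elim: t => //= l IHl r _; rewrite size_cat addn_gt0 IHl. Qed.

Lemma size_leaf_depths (t : btree) : size (leaf_depths t) = size (leaves t).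
Proof. by elim: t => //= l IHl r IHr; rewrite size_map !size_cat IHl IHr. Qed.

Lemma sackin_node (l r : btree) :
  sackin (Node l r) = sackin l + sackin r + size (leaves l) + size (leaves r).
Proof.
have sumn_mapS (s : seq nat) : sumn (map S s) = sumn s + size s.
  by elim: s => //= x s ->; rewrite addnS addSn addnA.
by rewrite /sackin /= sumn_mapS sumn_cat size_cat !size_leaf_depths addnA.
Qed.

Lemma minleaf_in (t : btree) : minleaf t \in leaves t.
Proof.
elim: t => [b|l IHl r IHr] /=; first by rewrite inE.
by rewrite mem_cat /minn; case: ifP => _; rewrite ?IHl ?IHr ?orbT.
Qed.

Lemma sumn_map_affine (T : eqType) (f g : T -> nat) (c d : nat) (s : seq T) :
  (forall x, x \in s -> g x = c * f x + d) ->
  sumn (map g s) = c * sumn (map f s) + d * size s.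
Proof.
elim: s => [|x s IH] gE /=; first by rewrite !muln0.
rewrite gE ?mem_head // IH; first by rewrite mulnS; lia.
by move=> y ys; apply: gE; rewrite inE ys orbT.
Qed.

Lemma uniq_flatten_map (T U : eqType) (f : T -> seq U) (s : seq T) :
  uniq s -> (forall t, t \in s -> uniq (f t)) ->
  (forall t1 t2 x, t1 \in s -> t2 \in s -> x \in f t1 -> x \in f t2 -> t1 = t2) ->
  uniq (flatten (map f s)).
Proof.
elim: s => //= t s IH /andP [t_notin_s uniq_s] uniq_f disj.
rewrite cat_uniq uniq_f ?mem_head //= IH //; first last.
- by move=> t1 t2 x t1s t2s; apply: disj; rewrite inE ?t1s ?t2s orbT.
- by move=> t1 t1s; apply: uniq_f; rewrite inE t1s orbT.
rewrite andbT; apply/hasPn => x /flatten_mapP [t2 t2s xt2]; apply/negP => xt.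
have t_eq : t = t2 by apply: (disj t t2 x); rewrite ?mem_head ?inE ?t2s ?orbT.
by move: t_notin_s; rewrite t_eq t2s.
Qed.

(* [graft a t]: the trees obtained from [t] by attaching a new leaf [a] as the
   right sibling of one node of [t], i.e. by subdividing one of the [2m - 1]
   edges of [t] (counting a virtual edge above the root) and hanging [a] there. *)
Fixpoint graft (a : nat) (t : btree) : seq btree :=
  Node t (Leaf a) ::
  match t with
  | Leaf _ => [::]
  | Node l r => [seq Node l' r | l' <- graft a l] ++ [seq Node l r' | r' <- graft a r]
  end.

Variant graft_node_spec (a : nat) (l r : btree) : btree -> Prop :=
  | GraftRoot : graft_node_spec a l r (Node (Node l r) (Leaf a))
  | GraftLeft l' of l' \in graft a l : graft_node_spec a l r (Node l' r)
  | GraftRight r' of r' \in graft a r : graft_node_spec a l r (Node l r').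

Lemma graft_nodeP (a : nat) (l r x : btree) :
  x \in graft a (Node l r) -> graft_node_spec a l r x.
Proof.
rewrite inE mem_cat => /orP [/eqP ->|/orP [/mapP [l' ? ->]|/mapP [r' ? ->]]].
- exact: GraftRoot.
- exact: GraftLeft.
- exact: GraftRight.
Qed.

Lemma graft_leaf (a b : nat) (x : btree) :
  x \in graft a (Leaf b) -> x = Node (Leaf b) (Leaf a).
Proof. by rewrite inE => /eqP. Qed.

Lemma graft_root (a : nat) (t : btree) : Node t (Leaf a) \in graft a t.
Proof. by case: t => [?|? ?]; rewrite /= inE eqxx. Qed.

Lemma graft_neq_leaf (a b : nat) (t x : btree) : x \in graft a t -> x != Leaf b.
Proof. by case: t => [c /graft_leaf ->|l r /graft_nodeP []]. Qed.

Lemma graft_leaves (a : nat) (t x : btree) :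
  x \in graft a t -> perm_eq (leaves x) (a :: leaves t).
Proof.
elim: t x => [b|l IHl r IHr] x; first by move/graft_leaf ->; rewrite perm_catC.
case/graft_nodeP => [|l' /IHl|r' /IHr] /=.
- by rewrite cats1 perm_rcons.
- by rewrite -cat_cons perm_cat2r.
- rewrite -(perm_cat2l (leaves l)) => /perm_trans; apply.
  by rewrite (perm_catCA (leaves l) [:: a]).
Qed.

Lemma mem_graft_leaves (a : nat) (t x : btree) : x \in graft a t -> a \in leaves x.
Proof. by move/graft_leaves/perm_mem ->; rewrite mem_head. Qed.

Lemma minleaf_lt (a : nat) (t : btree) :
  all (fun b => b < a) (leaves t) -> minleaf t < a.
Proof. by move/allP; apply; apply: minleaf_in. Qed.

Lemma graft_minleaf (a : nat) (t x : btree) : all (fun b => b < a) (leaves t) ->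
  x \in graft a t -> minleaf x = minleaf t.
Proof.
elim: t x => [b|l IHl r IHr] x lt_a.
  by move/graft_leaf ->; rewrite /= (minn_idPl (ltnW (minleaf_lt lt_a))).
have /= := lt_a; rewrite all_cat => /andP [Hl Hr].
case/graft_nodeP => [|l' l'l|r' r'r] /=.
- by rewrite (minn_idPl (ltnW (minleaf_lt lt_a))).
- by rewrite (IHl _ Hl l'l).
- by rewrite (IHr _ Hr r'r).
Qed.

Lemma graft_canonical (a : nat) (t x : btree) : all (fun b => b < a) (leaves t) ->
  x \in graft a t -> canonical x = canonical t.
Proof.
elim: t x => [b|l IHl r IHr] x lt_a.
  by move/graft_leaf ->; rewrite /= (minleaf_lt lt_a).
have /= := lt_a; rewrite all_cat => /andP [Hl Hr].
case/graft_nodeP => [|l' l'l|r' r'r] /=.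
- by rewrite (minleaf_lt lt_a) !andbT.
- by rewrite (IHl _ Hl l'l) (graft_minleaf Hl l'l).
- by rewrite (IHr _ Hr r'r) (graft_minleaf Hr r'r).
Qed.

Fixpoint prune (a : nat) (t : btree) : btree :=
  match t with
  | Leaf b => Leaf b
  | Node l r =>
      if r == Leaf a then l else if l == Leaf a then r
      else if a \in leaves l then Node (prune a l) r else Node l (prune a r)
  end.

Lemma leaf_notin_neq (a : nat) (t : btree) : a \notin leaves t -> t != Leaf a.
Proof. by apply: contraNneq => ->; rewrite mem_head. Qed.

Lemma graftK (a : nat) (t x : btree) : a \notin leaves t ->
  x \in graft a t -> prune a x = t.
Proof.
elim: t x => [b|l IHl r IHr] x; first by move=> _ /graft_leaf -> /=; rewrite eqxx.
rewrite /= mem_cat negb_or => /andP [al ar].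
case/graft_nodeP => [|l' l'l|r' r'r] /=; first by rewrite eqxx.
- rewrite (negbTE (leaf_notin_neq ar)) (negbTE (graft_neq_leaf _ l'l)).
  by rewrite (mem_graft_leaves l'l) (IHl _ al l'l).
- rewrite (negbTE (graft_neq_leaf _ r'r)) (negbTE (leaf_notin_neq al)).
  by rewrite (negbTE al) (IHr _ ar r'r).
Qed.

(* Conversely, a canonical tree in which [a] is the largest label is a graft
   of its pruning: [a] is never a left child, since the left subtree holds the
   smallest label. *)
Lemma pruneK (a : nat) (t : btree) : canonical t -> all (fun b => b <= a) (leaves t) ->
  a \in leaves t -> t != Leaf a -> t \in graft a (prune a t).
Proof.
elim: t => [b|l IHl r IHr] /=; first by rewrite mem_seq1 => _ _ /eqP ->; rewrite eqxx.
case/and3P => cl cr lr; rewrite all_cat mem_cat => /andP [Hl Hr] a_lr _.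
have [->|r_ne] := eqVneq r (Leaf a); first exact: graft_root.
have [l_eq|l_ne] := eqVneq l (Leaf a).
  by have := allP Hr _ (minleaf_in r); rewrite leqNgt -[a]/(minleaf (Leaf a)) -l_eq lr.
case: ifP => al; rewrite /= inE mem_cat.
  by rewrite (map_f (fun l' => Node l' r)) ?orbT // IHl.
by rewrite al /= in a_lr; rewrite (map_f (fun r' => Node l r')) ?orbT // IHr.
Qed.

Lemma uniq_graft (a : nat) (t : btree) : a \notin leaves t -> uniq (graft a t).
Proof.
elim: t => [b|l IHl r IHr] //=; rewrite mem_cat negb_or => /andP [al ar].
have root_l : Node (Node l r) (Leaf a) \notin [seq Node l' r | l' <- graft a l].
  by apply/mapP => -[l' _ [_ r_eq]]; rewrite -r_eq mem_head in ar.
have root_r : Node (Node l r) (Leaf a) \notin [seq Node l r' | r' <- graft a r].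
  apply/mapP => -[r' r'r [_ r'_eq]].
  by have := graft_neq_leaf a r'r; rewrite -r'_eq eqxx.
have disj : ~~ has (mem [seq Node l' r | l' <- graft a l]) [seq Node l r' | r' <- graft a r].
  apply/hasPn => _ /mapP [r' _ ->]; apply/mapP => -[l' l'l [l_eq _]].
  by rewrite l_eq (mem_graft_leaves l'l) in al.
rewrite mem_cat negb_or root_l root_r cat_uniq disj !map_inj_uniq ?IHl ?IHr //.
- by move=> ? ? [].
- by move=> ? ? [].
Qed.

Lemma size_graft (a : nat) (t : btree) : (size (graft a t)).+1 = 2 * size (leaves t).
Proof. by elim: t => //= l IHl r IHr; rewrite size_cat !size_map size_cat; lia. Qed.

(* Grafting at a node v raises S by the number of
   leaves below v plus depth(v) + 1; summed over the 2m - 1 nodes this is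
   (S + m) + (2S + 1).  In the inductive step the leaf counts are written as
   successors so that the final identity is subtraction-free. *)
Lemma sackin_graft (a : nat) (t : btree) :
  sumn (map sackin (graft a t)) =
  (2 * size (leaves t) + 2) * sackin t + size (leaves t) + 1.
Proof.
elim: t => [b|l IHl r IHr] //=; rewrite map_cat sumn_cat -!map_comp.
set ml := size (leaves l); set mr := size (leaves r).
rewrite (@sumn_map_affine _ sackin _ 1 (sackin r + ml.+1 + mr) (graft a l)); last first.
  by move=> x xl /=; rewrite sackin_node (perm_size (graft_leaves xl)) /= -/ml; lia.
rewrite (@sumn_map_affine _ sackin _ 1 (sackin l + ml + mr.+1) (graft a r)); last first.
  by move=> x xr /=; rewrite sackin_node (perm_size (graft_leaves xr)) /= -/mr; lia.
have [ml' ml_eq] : exists ml', ml = ml'.+1 by exists ml.-1; rewrite prednK ?size_leaves_gt0.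
have [mr' mr_eq] : exists mr', mr = mr'.+1 by exists mr.-1; rewrite prednK ?size_leaves_gt0.
have gl : size (graft a l) = 2 * ml' + 1.
  by have := size_graft a l; rewrite -/ml ml_eq; lia.
have gr : size (graft a r) = 2 * mr' + 1.
  by have := size_graft a r; rewrite -/mr mr_eq; lia.
rewrite IHl IHr !sackin_node size_cat -/ml -/mr gl gr ml_eq mr_eq.
have -> : sackin (Leaf a) = 0 by [].
rewrite [size (leaves (Leaf a))]/=; nia.
Qed.

Lemma perm_iotaS (n : nat) : perm_eq (iota 1 n.+1) (n.+1 :: iota 1 n).
Proof. by rewrite -[n.+1]addn1 iotaD /= cats1 perm_rcons add1n addn1. Qed.

Lemma mem_leaves_BT (n : nat) (t : btree) (b : nat) :
  is_BT n t -> (b \in leaves t) = (0 < b <= n).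
Proof. by case/andP => /perm_mem ->; rewrite mem_iota; lia. Qed.

Lemma leaves_BT_lt (n : nat) (t : btree) : is_BT n t -> all (fun b => b < n.+1) (leaves t).
Proof. by move=> tBT; apply/allP => b; rewrite (mem_leaves_BT _ tBT); lia. Qed.

Lemma notin_leaves_BT (n : nat) (t : btree) : is_BT n t -> n.+1 \notin leaves t.
Proof. by move=> tBT; rewrite (mem_leaves_BT _ tBT) ltnn andbF. Qed.

Lemma size_leaves_BT (n : nat) (t : btree) : is_BT n t -> size (leaves t) = n.
Proof. by case/andP => /perm_size ->; rewrite size_iota. Qed.

Lemma graft_BT (n : nat) (t x : btree) : is_BT n t -> x \in graft n.+1 t -> is_BT n.+1 x.
Proof.
move=> tBT xt; have /andP [leaves_t can_t] := tBT.
rewrite /is_BT (graft_canonical (leaves_BT_lt tBT) xt) can_t andbT.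
apply: perm_trans (graft_leaves xt) _; rewrite perm_sym.
by apply: perm_trans (perm_iotaS n) _; rewrite perm_cons perm_sym.
Qed.

Lemma prune_BT (n : nat) (x : btree) : 0 < n -> is_BT n.+1 x ->
  is_BT n (prune n.+1 x) /\ x \in graft n.+1 (prune n.+1 x).
Proof.
move=> n_gt0 xBT; have /andP [leaves_x can_x] := xBT.
have x_ne : x != Leaf n.+1.
  by apply: contraTneq n_gt0 => x_eq; move: (size_leaves_BT xBT); rewrite x_eq => -[<-].
have xg : x \in graft n.+1 (prune n.+1 x).
  apply: pruneK => //; last by rewrite (mem_leaves_BT _ xBT) /=.
  by apply/allP => b; rewrite (mem_leaves_BT _ xBT); lia.
have leaves_p : perm_eq (leaves (prune n.+1 x)) (iota 1 n).
  rewrite -(perm_cons n.+1); apply: (@perm_trans _ (leaves x)).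
    by rewrite perm_sym (graft_leaves xg).
  exact: perm_trans leaves_x (perm_iotaS n).
have p_lt : all (fun b => b < n.+1) (leaves (prune n.+1 x)).
  by apply/allP => b; rewrite (perm_mem leaves_p) mem_iota; lia.
by rewrite /is_BT leaves_p -(graft_canonical p_lt xg) can_x.
Qed.

Fixpoint bt_enum (n : nat) : seq btree :=
  match n with
  | 0 => [::]
  | 1 => [:: Leaf 1]
  | m.+1 => flatten [seq graft n t | t <- bt_enum m]
  end.

Lemma bt_enumS (n : nat) : bt_enum n.+2 = flatten [seq graft n.+2 t | t <- bt_enum n.+1].
Proof. by []. Qed.

Lemma is_BT1 (t : btree) : is_BT 1 t = (t == Leaf 1).
Proof.
apply/idP/eqP => [/[dup] /size_leaves_BT|->//]; case: t => [b|l r] /=.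
- by move=> _ /andP [/perm_mem/(_ b)]; rewrite !mem_seq1 eqxx => /esym/eqP ->.
- by rewrite size_cat; have := size_leaves_gt0 l; have := size_leaves_gt0 r; lia.
Qed.

Lemma mem_bt_enum (n : nat) (t : btree) : (t \in bt_enum n.+1) = is_BT n.+1 t.
Proof.
elim: n t => [|n IH] t; first by rewrite is_BT1 mem_seq1.
rewrite bt_enumS; apply/flatten_mapP/idP => [[t' t'n tt']|tBT].
  by apply: graft_BT tt'; rewrite -IH.
by have [pBT tp] := prune_BT (ltn0Sn n) tBT; exists (prune n.+2 t); rewrite ?IH.
Qed.

(* ... each once: distinct trees have disjoint sets of grafts since
   pruning recovers the tree. *)
Lemma uniq_bt_enum (n : nat) : uniq (bt_enum n.+1).
Proof.
elim: n => // n IH; rewrite bt_enumS; apply: uniq_flatten_map => //.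
  by move=> t; rewrite mem_bt_enum => /notin_leaves_BT; apply: uniq_graft.
move=> t1 t2 x; rewrite !mem_bt_enum => /notin_leaves_BT t1_new /notin_leaves_BT t2_new.
by move=> xt1 xt2; rewrite -(graftK t1_new xt1) (graftK t2_new xt2).
Qed.

Definition bt_count (n : nat) : nat := size (bt_enum n).
Definition sackin_total (n : nat) : nat := sumn (map sackin (bt_enum n)).

(* Each tree with n leaves has 2n - 1 grafts. *)
Lemma bt_countS (n : nat) : bt_count n.+2 = (2 * n + 1) * bt_count n.+1.
Proof.
rewrite /bt_count bt_enumS size_flatten /shape -map_comp.
rewrite (@sumn_map_affine _ (fun=> 0) _ 0 (2 * n + 1)) ?muln0 // => t.
rewrite mem_bt_enum => /size_leaves_BT t_size /=.
by have := size_graft n.+2 t; rewrite t_size; lia.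
Qed.

Lemma sackin_totalS (n : nat) :
  sackin_total n.+2 = (2 * n + 4) * sackin_total n.+1 + (n + 2) * bt_count n.+1.
Proof.
rewrite /sackin_total /bt_count bt_enumS map_flatten sumn_flatten -!map_comp.
apply: sumn_map_affine => t; rewrite mem_bt_enum => /size_leaves_BT t_size /=.
by rewrite sackin_graft t_size; lia.
Qed.

Lemma bt_count_closed (n : nat) : bt_count n.+1 * (2 ^ n * n`!) = (2 * n)`!.
Proof.
elim: n => // n IH; rewrite bt_countS expnS factS.
have -> : 2 * n.+1 = (2 * n).+2 by lia.
by rewrite !factS; nia.
Qed.

Lemma sackin_total_closed (n : nat) :
  sackin_total n.+1 + n.+1 * bt_count n.+1 = n.+1 * (2 ^ n * n`!).
Proof.
elim: n => // n IH; rewrite sackin_totalS bt_countS expnS factS; nia.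
Qed.

Lemma matchbox_sum (n : nat) :
  \sum_(0 <= j < n.+1) 'C(n + j, j) * 2 ^ (n - j) = 4 ^ n.
Proof.
elim: n => [|n IH]; first by rewrite big_nat1.
pose S (m : nat) := \sum_(0 <= j < m.+1) 'C(m + j, j) * 2 ^ (m - j).
set X := \sum_(0 <= j < n.+1) 'C(n.+1 + j, j) * 2 ^ (n - j).
set Y := \sum_(0 <= j < n.+1) 'C(n.+1 + j, j.+1) * 2 ^ (n - j).
set C := 'C(n + n.+1, n.+1).
have S_last : S n.+1 = 2 * X + 'C(n.+1 + n.+1, n.+1).
  rewrite /S big_nat_recr //= subnn muln1 /X big_distrr /=; congr (_ + _).
  apply: eq_big_nat => j /andP [_ jn]; rewrite subSn // expnS; lia.
(* Pascal's rule on every term. *)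
have S_pascal : S n.+1 = 2 ^ n.+1 + Y + X.
  rewrite /S big_nat_recl // addn0 bin0 mul1n subn0 -addnA; congr (_ + _).
  rewrite /X /Y -big_split /=; apply: eq_big_nat => j _.
  by rewrite addnS binS subSS mulnDl.
have Y_eq : 2 ^ n.+1 + Y = 2 * S n + C.
  have -> : 2 * S n + C = \sum_(0 <= j < n.+2) 'C(n + j, j) * 2 ^ (n.+1 - j).
    rewrite big_nat_recr //= subnn muln1 /S big_distrr /=; congr (_ + _).
    apply: eq_big_nat => j /andP [_ jn]; rewrite subSn // expnS; lia.
  rewrite big_nat_recl // addn0 bin0 mul1n subn0; congr (_ + _).
  by apply: eq_big_nat => j _; rewrite addnS addSn subSS.
have C_double : 'C(n.+1 + n.+1, n.+1) = 2 * C.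
  rewrite /C addnS binS -(bin_sub (leq_addl n.+1 n)) addnK (addnC n.+1 n); lia.
rewrite expnS -IH -/(S n) -/(S n.+1); lia.
Qed.

Section RationalIdentity.
Local Open Scope ring_scope.

Lemma natr_neq0 (R : numDomainType) (m : nat) : (0 < m)%N -> (m%:R : R) != 0.
Proof. by move=> m_gt0; rewrite pnatr_eq0 -lt0n. Qed.

(* The coefficient of k^2 in the summand of the theorem. *)
Definition coef (n k : nat) : rat :=
  ((2 * n - k - 3)`!)%:R / (((n - k - 1)`!)%:R * (2 ^ (n - k - 1))%:R).

Lemma sum_coef (n : nat) : \sum_(1 <= k < n.+2) coef n.+2 k = (n`! * 2 ^ n)%:R.
Proof.
rewrite big_add1 /= big_nat_rev /=.
have pow2_neq0 (m : nat) := natr_neq0 rat (expn_gt0 2 m).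
have fact_neq0 (m : nat) := natr_neq0 rat (fact_gt0 m).
transitivity (\sum_(0 <= j < n.+1)
   ((n`!)%:R / (2 ^ n)%:R : rat) * ('C(n + j, j) * 2 ^ (n - j))%:R).
  apply: eq_big_nat => j /andP [_ jn]; rewrite ltnS in jn.
  rewrite add0n subSS /coef.
  have -> : (2 * n.+2 - (n - j).+1 - 3 = n + j)%N by lia.
  have -> : (n.+2 - (n - j).+1 - 1 = j)%N by lia.
  rewrite -(bin_fact (leq_addl n j)) addnK.
  have -> : (2 ^ n = 2 ^ (n - j) * 2 ^ j)%N by rewrite -expnD subnK.
  rewrite !natrM; field.
  by rewrite fact_neq0 !pow2_neq0.
rewrite -mulr_sumr -natr_sum matchbox_sum (_ : 4 = 2 * 2)%N // expnMn !natrM.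
by field; rewrite pow2_neq0.
Qed.

(* With tele(n, i) = 2 (n - 1 - i) (i - 1) coef(n, i), the summand
   telescopes: k^2 coef(n, k) = 2 (n - 1) coef(n, k) + tele(n, k - 1)
   - tele(n, k) for 1 <= k <= n - 1. *)
Definition tele (n i : nat) : rat := (2 * (n - 1 - i))%:R * (i%:R - 1) * coef n i.

Lemma coef_telescope (n i : nat) : (i <= n)%N ->
  coef n.+2 i.+1 * ((i.+1 ^ 2)%:R) =
  2 * (n.+1)%:R * coef n.+2 i.+1 + (tele n.+2 i - tele n.+2 i.+1).
Proof.
move=> /subnK <-; set q := (n - i)%N; clearbody q.
rewrite /tele /coef.
have -> : (2 * (q + i).+2 - i.+1 - 3 = i + 2 * q)%N by lia.
have -> : ((q + i).+2 - i.+1 - 1 = q)%N by lia.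
have -> : (2 * (q + i).+2 - i - 3 = (i + 2 * q).+1)%N by lia.
have -> : ((q + i).+2 - i - 1 = q.+1)%N by lia.
have -> : ((q + i).+2 - 1 - i = q.+1)%N by lia.
have -> : ((q + i).+2 - 1 - i.+1 = q)%N by lia.
rewrite !factS (expnS 2 q) !natrM; field.
by rewrite !natr_neq0 ?expn_gt0 ?fact_gt0 //= addrC natr1 natr_neq0.
Qed.

Lemma sum_closed (m : nat) :
  \sum_(1 <= k < m.+2) (((2 * m.+2 - k - 3)`!)%:R * (k ^ 2)%:R
     / (((m.+2 - k - 1)`!)%:R * (2 ^ (m.+2 - k - 1))%:R))
  = (2 ^ m.+1 * m.+1`!)%:R - ((2 * m.+1)`!)%:R / (2 ^ m.+1 * m.+1`!)%:R :> rat.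
Proof.
transitivity (\sum_(1 <= k < m.+2) coef m.+2 k * (k ^ 2)%:R).
  by apply: eq_bigr => k _; rewrite /coef mulrAC.
rewrite big_add1 /=.
transitivity (\sum_(0 <= i < m.+1)
   (2 * (m.+1)%:R * coef m.+2 i.+1 + (tele m.+2 i - tele m.+2 i.+1))).
  by apply: eq_big_nat => i /andP [_ im]; apply: coef_telescope; rewrite -ltnS.
rewrite big_split /= -mulr_sumr.
rewrite (telescope_sumr_eq (fun i => - tele m.+2 i)
                          (fun i => tele m.+2 i - tele m.+2 i.+1)) //; last first.
  by move=> k _; rewrite opprK addrC.
have -> : \sum_(0 <= i < m.+1) coef m.+2 i.+1 = (m`! * 2 ^ m)%:R.
  by rewrite -sum_coef big_add1.
rewrite /tele /coef.
have -> : (m.+2 - 1 - m.+1 = 0)%N by lia.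
have -> : (2 * m.+2 - 0 - 3 = (2 * m).+1)%N by lia.
have -> : (m.+2 - 0 - 1 = m.+1)%N by lia.
have -> : (m.+2 - 1 - 0 = m.+1)%N by lia.
have -> : (2 * m.+1 = (2 * m).+2)%N by lia.
rewrite !factS expnS !natrM; field.
rewrite !natr_neq0 ?expn_gt0 ?fact_gt0 //=.
by rewrite addrC natr1 natr_neq0.
Qed.

Lemma sackin_total_rat (m : nat) :
  (sackin_total m.+2)%:R = (m.+2)%:R * ((2 ^ m.+1 * m.+1`!)%:R
     - ((2 * m.+1)`!)%:R / (2 ^ m.+1 * m.+1`!)%:R) :> rat.
Proof.
have P_neq0 : (2 ^ m.+1 * m.+1`!)%:R != 0 :> rat.
  by rewrite natr_neq0 ?muln_gt0 ?expn_gt0 ?fact_gt0.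
rewrite -(bt_count_closed m.+1) [X in X / _]natrM mulfK // mulrBr -!natrM.
by rewrite -(sackin_total_closed m.+1) natrD addrK.
Qed.

End RationalIdentity.

Lemma In_mem (T : eqType) (s : seq T) (x : T) : List.In x s <-> x \in s.
Proof.
elim: s => [|y s IH] //=; rewrite inE; split.
  by case=> [->|/IH ->]; rewrite ?eqxx ?orbT.
by case/orP => [/eqP ->|/IH]; [left|right].
Qed.

Lemma NoDup_uniq (T : eqType) (s : seq T) : List.NoDup s <-> uniq s.
Proof.
elim: s => [|x s IH] /=; first by split => // _; constructor.
split=> [nd|/andP [x_notin uniq_s]].
  by inversion nd; apply/andP; split; [apply/negP => /In_mem | apply/IH].
by constructor; [move/In_mem; apply/negP | apply/IH].
Qed.

Lemma BT_listing_perm (n : nat) (s : seq btree) : List.NoDup s ->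
  (forall t, List.In t s <-> is_BT n.+1 t) -> perm_eq s (bt_enum n.+1).
Proof.
move=> /NoDup_uniq uniq_s s_BT; apply: uniq_perm => // [|t]; first exact: uniq_bt_enum.
by rewrite mem_bt_enum; apply/idP/idP => [/In_mem/s_BT|/s_BT/In_mem].
Qed.

Theorem mainTheorem17 (n : nat) (hn : 3 <= n) :
  (exists s : seq btree, List.NoDup s /\ (forall t, List.In t s <-> is_BT n t)) /\
  (forall s : seq btree, List.NoDup s -> (forall t, List.In t s <-> is_BT n t) ->
     ((sumn (map sackin s))%:R : rat) =
     (n%:R * \sum_(1 <= k < n)
        (((2 * n - k - 3)`!)%:R * (k ^ 2)%:R
         / (((n - k - 1)`!)%:R * (2 ^ (n - k - 1))%:R)))%R).
Proof.
case: n hn => [|[|m]] // _; split.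
  exists (bt_enum m.+2); split; first exact/NoDup_uniq/uniq_bt_enum.
  by move=> t; rewrite In_mem mem_bt_enum.
move=> s s_nodup s_BT.
rewrite (perm_sumn (perm_map sackin (BT_listing_perm s_nodup s_BT))).
by rewrite -/(sackin_total m.+2) sackin_total_rat sum_closed.
Qed.
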